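(* Let $X$ be a $3$-long liner. If $X$ is proaffine, then any lines $L,\Lambda$ in $X$ satisfy $|L|\le|\Lambda|+2$. If $X$ is Proclus, then any lines $L,\Lambda$ in $X$ satisfy $|L|\le|\Lambda|+1$.
   Context: A liner is a set $X$ of points with a family of subsets called lines such that any two distinct points lie in a unique line and every line contains at least two points. For distinct $x,y$, $\overline{xy}$ is the line through them and $\overline{xx}:=\{x\}$. A set is flat if it contains $\overline{xy}$ for all its distinct points; $\overline A$ is the smallest flat containing $A$; the rank $\|A\|$ is the smallest cardinality of $B$ with $A\subseteq\overline B$; a plane is a flat of rank 3. $X$ is $3$-long if every line has at least $3$ points. $X$ is proaffine if for all $o,x,y\in X$ and $p\in\overline{xy}\setminus\overline{ox}$ there exists $u\in\overline{oy}$ such that $\overline{vp}\cap\overline{ox}\ne\varnothing$ for every $v\in\overline{oy}\setminus\{u\}$. $X$ is Proclus if for every plane $P$, line $L\subseteq P$ and point $x\in P\setminus L$ there is at most one line $\Lambda$ with $x\in\Lambda\subseteq P\setminus L$. *)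

From Stdlib Require Import List Arith.
Import ListNotations.
Set Implicit Arguments.

Section Liner.
Variable X : Type.
Variable Line : (X -> Prop) -> Prop.

Definition subset (A B : X -> Prop) : Prop := forall z, A z -> B z.

Definition is_liner : Prop :=
  (forall L, Line L -> exists a b, a <> b /\ L a /\ L b) /\
  (forall x y, x <> y ->
     exists L, Line L /\ L x /\ L y /\
       forall L', Line L' -> L' x -> L' y -> L' = L).

Definition lxy (x y : X) : X -> Prop := fun z =>
  (x = y /\ z = x) \/ (x <> y /\ exists L, Line L /\ L x /\ L y /\ L z).

Definition flat (A : X -> Prop) : Prop :=
  forall x y, A x -> A y -> x <> y -> subset (lxy x y) A.

Definition closure (A : X -> Prop) : X -> Prop := fun z =>
  forall F, flat F -> subset A F -> F z.

(* ||A|| = n : n is the smallest cardinality of a set B with A ⊆ cl B.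
   (A set of cardinality n is the set of entries of a duplicate-free list
   of length n; only finite B can realize a finite rank.) *)
Definition has_rank (A : X -> Prop) (n : nat) : Prop :=
  (exists B : list X, NoDup B /\ length B = n /\
      subset A (closure (fun z => In z B))) /\
  (forall B : list X, NoDup B -> subset A (closure (fun z => In z B)) ->
      n <= length B).

Definition plane (P : X -> Prop) : Prop := flat P /\ has_rank P 3.

Definition three_long : Prop :=
  forall L, Line L -> exists a b c, L a /\ L b /\ L c /\
     a <> b /\ a <> c /\ b <> c.

Definition proaffine : Prop :=
  forall o x y p, lxy x y p -> ~ lxy o x p ->
    exists u, lxy o y u /\
      forall v, lxy o y v -> v <> u ->
        exists w, lxy v p w /\ lxy o x w.

Definition proclus : Prop :=
  forall P L x, plane P -> Line L -> subset L P -> P x -> ~ L x ->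
    forall M1 M2, Line M1 -> Line M2 ->
      M1 x -> subset M1 (fun z => P z /\ ~ L z) ->
      M2 x -> subset M2 (fun z => P z /\ ~ L z) ->
      M1 = M2.
End Liner.

(* Cardinal inequality |A| <= |B| + k : there is an injection from A into
   the disjoint union of B and a k-element set. *)
Definition card_le_plus (X : Type) (A B : X -> Prop) (k : nat) : Prop :=
  exists f : {x | A x} -> ({y | B y} + {i : nat | i < k})%type,
    forall a1 a2, f a1 = f a2 -> a1 = a2.

From Stdlib Require Import List Arith Lia Classical ClassicalEpsilon ProofIrrelevance FinFun.
Import ListNotations.
Set Implicit Arguments.

(* For meeting lines [A], [B], project [A] onto [B] from a point [p] of a line joining them:
   this is injective where defined, and Proclus (resp. proaffinity) leaves at most one point
   of [A] without image, so [|A| <= |B| + 1]. Disjoint lines are compared through a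
   transversal, which gives [+2]. In the Proclus case that bound is sharpened to [+1]:
   an infinite [B] absorbs one extra point, and for finite lines a double count in a plane
   rules out [|A| = |B| + 2]. *)

Section Cardinality.
Variable T : Type.

Definition asbool (P : Prop) : bool := if excluded_middle_informative P then true else false.

Lemma asbool_true (P : Prop) : asbool P = true <-> P.
Proof. unfold asbool; destruct (excluded_middle_informative P); split; auto; discriminate. Qed.

Definition enum (A : T -> Prop) (l : list T) : Prop := NoDup l /\ forall x, A x <-> In x l.

Lemma enum_of_cover (A : T -> Prop) l : (forall x, A x -> In x l) -> exists l', enum A l'.
Proof.
  intros H. exists (nodup (fun x y => excluded_middle_informative (x = y))
                          (filter (fun x => asbool (A x)) l)).
  split; [apply NoDup_nodup|].
  intros x. rewrite nodup_In, filter_In, asbool_true. intuition.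
Qed.

Lemma enum_ext (A B : T -> Prop) l : (forall x, A x <-> B x) -> enum A l -> enum B l.
Proof. intros H [H1 H2]; split; auto. intros x; rewrite <- H; auto. Qed.

Lemma enum_filter (A : T -> Prop) l (p : T -> bool) :
  enum A l -> enum (fun x => A x /\ p x = true) (filter p l).
Proof. intros [H1 H2]. split; [apply NoDup_filter; auto|]. intros x. rewrite filter_In, H2. tauto. Qed.

Lemma enum_length_le_inj (A B : T -> Prop) lA lB (f : T -> T) :
  enum A lA -> enum B lB -> (forall x, A x -> B (f x)) ->
  (forall x y, A x -> A y -> f x = f y -> x = y) -> length lA <= length lB.
Proof.
  intros [HA HA'] [HB HB'] Hf Hi.
  rewrite <- (length_map f lA). apply NoDup_incl_length.
  - apply NoDup_map_NoDup_ForallPairs; auto. intros x y Hx Hy; apply Hi; apply HA'; auto.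
  - intros y Hy. apply in_map_iff in Hy as [x [<- Hx]]. apply HB', Hf, HA', Hx.
Qed.

Lemma enum_length_unique (A : T -> Prop) l1 l2 : enum A l1 -> enum A l2 -> length l1 = length l2.
Proof.
  intros H1 H2. apply Nat.le_antisymm;
    [apply (enum_length_le_inj (fun x => x) H1 H2) |
     apply (enum_length_le_inj (fun x => x) H2 H1)]; auto.
Qed.

Lemma enum_remove (A : T -> Prop) l a : enum A l -> A a ->
  exists l', enum (fun x => A x /\ x <> a) l' /\ S (length l') = length l.
Proof.
  intros [H1 H2] Ha. assert (Hin : In a l) by (apply H2; auto).
  apply in_split in Hin as [l1 [l2 ->]].
  exists (l1 ++ l2). split.
  - split; [eapply NoDup_remove_1; eauto|].
    intros x. rewrite H2, !in_app_iff. simpl.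
    apply NoDup_remove_2 in H1. rewrite in_app_iff in H1.
    split; [intros [[H|[H|H]] Hx]; auto; congruence|].
    intros [H|H]; split; auto; intros ->; auto.
  - rewrite !length_app; simpl; lia.
Qed.

Lemma enum_length_le_1 (A : T -> Prop) l :
  enum A l -> (forall a b, A a -> A b -> a = b) -> length l <= 1.
Proof.
  intros [Hn HA] H. destruct l as [|a [|b l]]; simpl; try lia.
  assert (a = b) by (apply H; apply HA; simpl; auto). subst.
  inversion Hn; subst. simpl in *. tauto.
Qed.

Lemma enum_length_0 (A : T -> Prop) l : enum A l -> (forall a, ~ A a) -> length l = 0.
Proof. intros [_ HA] H. destruct l as [|a l]; auto. exfalso. apply (H a), HA. simpl; auto. Qed.

Lemma list_sum_map_add (D : list T) (f g : T -> nat) :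
  list_sum (map (fun d => f d + g d) D) = list_sum (map f D) + list_sum (map g D).
Proof. induction D; simpl; lia. Qed.

Lemma list_sum_map_const (D : list T) (s : T -> nat) k :
  (forall d, In d D -> s d = k) -> list_sum (map s D) = length D * k.
Proof. induction D; simpl; intros H; auto. Qed.

Lemma list_sum_map_two_values (D : list T) (s : T -> nat) k :
  (forall d, In d D -> s d = 0 \/ s d = k) -> exists t, t <= length D /\ list_sum (map s D) = t * k.
Proof.
  induction D as [|d D IH]; simpl; intros H; [exists 0; split; auto|].
  destruct IH as [t [Ht Hs]]; auto. destruct (H d) as [E|E]; auto.
  - exists t. lia.
  - exists (S t). simpl. lia.
Qed.

Lemma list_sum_indicator (D : list T) (y : T) :
  NoDup D -> In y D -> list_sum (map (fun d => if asbool (y = d) then 1 else 0) D) = 1.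
Proof.
  induction D as [|d D IH]; simpl; intros Hn Hin; [contradiction|]. inversion Hn; subst.
  unfold asbool at 1. destruct (excluded_middle_informative (y = d)) as [<-|Hne].
  - rewrite (@list_sum_map_const D _ 0); [lia|].
    intros e He. unfold asbool. destruct (excluded_middle_informative (y = e)); subst; tauto.
  - destruct Hin as [->|Hin]; [tauto|]. rewrite IH; auto.
Qed.

Lemma length_by_fibres (g : T -> T) (D l : list T) : NoDup D -> (forall x, In x l -> In (g x) D) ->
  length l = list_sum (map (fun d => length (filter (fun x => asbool (g x = d)) l)) D).
Proof.
  intros HD. induction l as [|x l IH]; simpl; intros H.
  - rewrite (@list_sum_map_const D _ 0); auto.
  - transitivity (list_sum (map (fun d => (if asbool (g x = d) then 1 else 0) +
          length (filter (fun x0 => asbool (g x0 = d)) l)) D)).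
    + rewrite list_sum_map_add, list_sum_indicator, IH; auto.
    + f_equal. apply map_ext. intros d. destruct (asbool (g x = d)); simpl; auto.
Qed.

Lemma finite_or_dedekind_infinite (A : T -> Prop) :
  (exists l, enum A l) \/
  (exists e : nat -> T, (forall n, A (e n)) /\ forall n m, e n = e m -> n = m).
Proof.
  destruct (classic (exists l, forall x, A x -> In x l)) as [[l Hl]|Hn].
  - left. eapply enum_of_cover; eauto.
  - right. assert (Hp : forall l, {x | A x /\ ~ In x l}).
    { intros l. apply constructive_indefinite_description.
      apply not_all_not_ex. intros H. apply Hn. exists l. intros x Hx.
      destruct (classic (In x l)); auto. exfalso; apply (H x); auto. }
    set (pick := fun l => proj1_sig (Hp l)).
    assert (Hpick : forall l, A (pick l) /\ ~ In (pick l) l) by (intros l; exact (proj2_sig (Hp l))).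
    set (gen := fix gen n := match n with 0 => [] | S n => pick (gen n) :: gen n end).
    exists (fun n => pick (gen n)). split; [intros n; apply Hpick|].
    assert (Hin : forall n m, n < m -> In (pick (gen n)) (gen m)).
    { intros n m; induction m; intros Hlt; [lia|]. simpl.
      destruct (Nat.eq_dec n m) as [->|]; [left; auto| right; apply IHm; lia]. }
    intros n m E. destruct (lt_eq_lt_dec n m) as [[Hlt|]|Hlt]; auto; exfalso.
    + apply (proj2 (Hpick (gen m))). rewrite <- E. apply Hin; auto.
    + apply (proj2 (Hpick (gen n))). rewrite E. apply Hin; auto.
Qed.

Lemma enum_split (A P : T -> Prop) l : enum A l -> exists l1 l2,
  enum (fun x => A x /\ P x) l1 /\ enum (fun x => A x /\ ~ P x) l2 /\
  length l = length l1 + length l2.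
Proof.
  intros HA. exists (filter (fun x => asbool (P x)) l), (filter (fun x => negb (asbool (P x))) l).
  split; [|split].
  - eapply enum_ext; [|apply enum_filter, HA]. intros x. simpl. rewrite asbool_true. tauto.
  - eapply enum_ext; [|apply enum_filter, HA]. intros x. simpl. rewrite Bool.negb_true_iff.
    unfold asbool. destruct (excluded_middle_informative (P x)); intuition discriminate.
  - symmetry. apply filter_length.
Qed.

(* A form of [card_le_plus A B k] with a total function and no subtypes. *)
Definition inj_plus (A B : T -> Prop) (k : nat) : Prop := exists f : T -> T + nat,
  (forall x, A x -> match f x with inl y => B y | inr i => i < k end) /\
  (forall x y, A x -> A y -> f x = f y -> x = y).

Lemma card_le_plus_of_inj_plus (A B : T -> Prop) k : inj_plus A B k -> card_le_plus A B k.
Proof.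
  intros [f [Hf Hi]].
  set (F := fun a : {x | A x} =>
    match f (proj1_sig a) as r return (match r with inl y => B y | inr i => i < k end) ->
       ({y | B y} + {i : nat | i < k})%type with
    | inl y => fun h => inl (exist _ y h)
    | inr i => fun h => inr (exist _ i h) end (Hf _ (proj2_sig a))).
  exists F. intros [x1 h1] [x2 h2] E.
  assert (f x1 = f x2).
  { unfold F in E; simpl in E. generalize dependent (Hf x1 h1). generalize dependent (Hf x2 h2).
    destruct (f x1), (f x2); intros; try discriminate; inversion E; auto. }
  assert (x1 = x2) by (apply Hi; auto). subst. f_equal. apply proof_irrelevance.
Qed.

Lemma inj_plus_refl (A : T -> Prop) k : inj_plus A A k.
Proof. exists inl. split; auto. intros x y _ _ E; inversion E; auto. Qed.

Lemma inj_plus_mono (A B : T -> Prop) k k' : k <= k' -> inj_plus A B k -> inj_plus A B k'.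
Proof.
  intros Hk [f [Hf Hi]]. exists f; split; auto.
  intros x Hx; specialize (Hf x Hx); destruct (f x); auto; lia.
Qed.

Lemma inj_plus_trans (A B C : T -> Prop) k1 k2 :
  inj_plus A B k1 -> inj_plus B C k2 -> inj_plus A C (k1 + k2).
Proof.
  intros [f [Hf Hfi]] [g [Hg Hgi]].
  exists (fun x => match f x with
                   | inl y => match g y with inl z => inl z | inr j => inr (k1 + j) end
                   | inr i => inr i end). split.
  - intros x Hx. specialize (Hf x Hx). destruct (f x) as [y|i]; [|lia].
    specialize (Hg y Hf). destruct (g y); auto; lia.
  - intros x x' Hx Hx' E. apply Hfi; auto.
    pose proof (Hf x Hx) as H1. pose proof (Hf x' Hx') as H2.
    destruct (f x) as [y|i], (f x') as [y'|i']; auto.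
    + pose proof (Hg y H1). pose proof (Hg y' H2).
      destruct (g y) eqn:E1, (g y') eqn:E2; inversion E; subst.
      * f_equal; apply Hgi; congruence.
      * assert (n = n0) by lia. subst. f_equal; apply Hgi; congruence.
    + destruct (g y); inversion E; lia.
    + destruct (g y'); inversion E; lia.
Qed.

Lemma inj_plus_enum (A B : T -> Prop) k lB : inj_plus A B k -> enum B lB ->
  exists lA, enum A lA /\ length lA <= length lB + k.
Proof.
  intros [f [Hf Hi]] [HB HB'].
  set (codom := map inl lB ++ map inr (seq 0 k) : list (T + nat)).
  assert (Hcodom : forall x, A x -> In (f x) codom).
  { intros x Hx. specialize (Hf x Hx). unfold codom. rewrite in_app_iff. destruct (f x) as [y|i].
    - left; apply in_map, HB', Hf.
    - right; apply in_map, in_seq; lia. }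
  destruct (classic (exists x0, A x0)) as [[x0 Hx0]|Hne].
  2:{ exists []. split; [split; [constructor|]|simpl; lia]. intros x; split; simpl; [|tauto].
      intros Hx; apply Hne; eauto. }
  (* [g] is a left inverse of [f] on [A], so [A] is covered by the image of [codom]. *)
  set (g := fun v => epsilon (inhabits x0) (fun x => A x /\ f x = v)).
  assert (Hcov : forall x, A x -> In x (map g codom)).
  { intros x Hx. apply in_map_iff. exists (f x). split; [|apply Hcodom; auto].
    assert (Hs : A (g (f x)) /\ f (g (f x)) = f x) by (apply epsilon_spec; eauto).
    apply Hi; tauto. }
  destruct (enum_of_cover _ _ Hcov) as [lA HA]. exists lA. split; auto.
  destruct HA as [HA HA'].
  replace (length lB + k) with (length codom)
    by (unfold codom; rewrite length_app, !length_map, length_seq; auto).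
  rewrite <- (length_map f lA). apply NoDup_incl_length.
  - apply NoDup_map_NoDup_ForallPairs; auto. intros x y Hx Hy; apply Hi; apply HA'; auto.
  - intros v Hv. apply in_map_iff in Hv as [x [<- Hx]]. apply Hcodom, HA', Hx.
Qed.

Lemma injection_into_longer_list (U : Type) (u0 : U) (l : list T) (t : list U) :
  NoDup l -> NoDup t -> length l <= length t ->
  exists f : T -> U, (forall x, In x l -> In (f x) t) /\
     (forall x y, In x l -> In y l -> f x = f y -> x = y).
Proof.
  revert t. induction l as [|a l IH]; intros t Hl Ht Hlen.
  - exists (fun _ => u0). split; simpl; tauto.
  - destruct t as [|b t]; simpl in Hlen; [lia|].
    apply NoDup_cons_iff in Hl as [Ha Hl]. apply NoDup_cons_iff in Ht as [Hb Ht].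
    destruct (IH t) as [f [Hf Hi]]; auto; try lia.
    exists (fun x => if excluded_middle_informative (x = a) then b else f x). split.
    + intros x Hx. destruct (excluded_middle_informative (x = a)); [left; auto|].
      destruct Hx as [<-|Hx]; [tauto|right; auto].
    + intros x y Hx Hy E.
      destruct (excluded_middle_informative (x = a)) as [->|Ex],
               (excluded_middle_informative (y = a)) as [->|Ey]; auto.
      * destruct Hy as [->|Hy]; [tauto|]. exfalso. apply Hb. rewrite E. auto.
      * destruct Hx as [->|Hx]; [tauto|]. exfalso. apply Hb. rewrite <- E. auto.
      * destruct Hx as [->|Hx], Hy as [->|Hy]; try tauto. apply Hi; auto.
Qed.

Lemma inj_plus_of_length (A B : T -> Prop) k lA lB : enum A lA -> enum B lB ->
  length lA <= length lB + k -> inj_plus A B k.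
Proof.
  intros [HA HA'] [HB HB'] Hlen.
  destruct (@injection_into_longer_list (T + nat) (inr 0) lA (map inl lB ++ map inr (seq 0 k)))
    as [f [Hf Hi]]; auto.
  - apply NoDup_app.
    + apply Injective_map_NoDup; auto. intros x y E; inversion E; auto.
    + apply Injective_map_NoDup; [|apply seq_NoDup]. intros x y E; inversion E; auto.
    + intros v H1 H2. apply in_map_iff in H1 as [? [<- _]]. apply in_map_iff in H2 as [? [E _]].
      discriminate.
  - rewrite length_app, !length_map, length_seq; auto.
  - exists f. split; [|intros x y Hx Hy; apply Hi; apply HA'; auto].
    intros x Hx. apply HA' in Hx. specialize (Hf x Hx). apply in_app_iff in Hf.
    destruct Hf as [H|H]; apply in_map_iff in H as [v [<- Hv]]; [apply HB'; auto|].
    apply in_seq in Hv; lia.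
Qed.

(* Hilbert's hotel: a Dedekind-infinite [B] absorbs one extra point. *)
Section Hotel.
Variables (B : T -> Prop) (e : nat -> T).
Hypotheses (He : forall n, B (e n)) (He_inj : forall n m, e n = e m -> n = m).

Definition hotel_shift (y : T) : T :=
  match excluded_middle_informative (exists n, y = e n) with
  | left H => e (S (proj1_sig (constructive_indefinite_description _ H)))
  | right _ => y
  end.

Lemma hotel_shift_inj y y' : hotel_shift y = hotel_shift y' -> y = y'.
Proof.
  unfold hotel_shift.
  destruct (excluded_middle_informative (exists n, y = e n)) as [H|H],
           (excluded_middle_informative (exists n, y' = e n)) as [H'|H']; intros E.
  - destruct (constructive_indefinite_description _ H) as [n ->],
             (constructive_indefinite_description _ H') as [n' ->].
    apply He_inj in E. simpl in E. congruence.
  - exfalso. apply H'. eauto.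
  - exfalso. apply H. eauto.
  - exact E.
Qed.

Lemma hotel_shift_not_e0 y : hotel_shift y <> e 0.
Proof.
  unfold hotel_shift. destruct (excluded_middle_informative (exists n, y = e n)) as [H|H]; intros E.
  - apply He_inj in E. discriminate.
  - apply H. eauto.
Qed.

Lemma inj_plus_absorb (A : T -> Prop) k : inj_plus A B (S k) -> inj_plus A B k.
Proof.
  intros [f [Hf Hi]].
  set (h := fun v : T + nat => match v with
     | inl y => inl (hotel_shift y) | inr 0 => inl (e 0) | inr (S i) => inr i end).
  exists (fun x => h (f x)). split.
  - intros x Hx. specialize (Hf x Hx). destruct (f x) as [y|[|i]]; simpl; auto; [|lia].
    unfold hotel_shift. destruct (excluded_middle_informative _); auto.
  - intros x x' Hx Hx' E. apply Hi; auto. unfold h in E.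
    destruct (f x) as [y|[|i]], (f x') as [y'|[|i']]; inversion E as [E']; auto.
    + f_equal. apply hotel_shift_inj; auto.
    + exfalso. eapply hotel_shift_not_e0; eauto.
    + exfalso. eapply hotel_shift_not_e0; eauto.
Qed.
End Hotel.

End Cardinality.

Section Liner.
Variable X : Type.
Variable Line : (X -> Prop) -> Prop.
Hypothesis HL : is_liner Line.
Hypothesis H3 : three_long Line.

(* A chosen line through [x] and [y]; meaningful only for [x <> y]. *)
Definition join (x y : X) : X -> Prop :=
  epsilon (inhabits (fun _ : X => True)) (fun K => Line K /\ K x /\ K y).

Lemma join_spec x y : x <> y -> Line (join x y) /\ join x y x /\ join x y y.
Proof.
  intros H. unfold join. apply epsilon_spec.
  destruct (proj2 HL x y H) as [K [HK [Hx [Hy _]]]]. eauto.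
Qed.

Lemma line_unique (A B : X -> Prop) x y :
  Line A -> Line B -> A x -> A y -> B x -> B y -> x <> y -> A = B.
Proof.
  intros HA HB Ax Ay Bx By Hxy. destruct (proj2 HL x y Hxy) as [K [HK [Hx [Hy Hu]]]].
  rewrite (Hu A), (Hu B); auto.
Qed.

Lemma join_eq (A : X -> Prop) x y : Line A -> A x -> A y -> x <> y -> join x y = A.
Proof. intros HA Ax Ay H. destruct (join_spec H) as [? [? ?]]. apply line_unique with x y; auto. Qed.

Lemma join_comm x y : x <> y -> join x y = join y x.
Proof. intros H. destruct (join_spec H) as [? [? ?]]. symmetry. apply join_eq; auto. Qed.

Lemma lxy_join x y z : x <> y -> (lxy Line x y z <-> join x y z).
Proof.
  intros H. unfold lxy. split.
  - intros [[E _]|[_ [K [HK [Kx [Ky Kz]]]]]]; [contradiction|].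
    rewrite (join_eq HK Kx Ky H); auto.
  - intros Hz. right. split; auto. exists (join x y). destruct (join_spec H) as [? [? ?]]. auto.
Qed.

Lemma line_point_ne (A : X -> Prop) o : Line A -> exists a, A a /\ a <> o.
Proof.
  intros HA. destruct (proj1 HL A HA) as [a [b [Hab [Ha Hb]]]].
  destruct (classic (a = o)); [exists b; split; auto; congruence | exists a; auto].
Qed.

Lemma line_point_off (A B : X -> Prop) o : Line A -> Line B -> A o -> B o -> A <> B ->
  exists a, A a /\ ~ B a /\ a <> o.
Proof.
  intros HA HB Ao Bo Hne. destruct (line_point_ne o HA) as [a [Aa Hao]].
  exists a. repeat split; auto. intros Ba. apply Hne. apply (line_unique HA HB Aa Ao Ba Bo Hao).
Qed.

Lemma line_third_point (A : X -> Prop) x y : Line A -> exists z, A z /\ z <> x /\ z <> y.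
Proof.
  intros HA. destruct (H3 HA) as [a [b [c [Ha [Hb [Hc [Hab [Hac Hbc]]]]]]]].
  destruct (classic (a = x \/ a = y)) as [Ha'|Ha']; [|exists a; tauto].
  destruct (classic (b = x \/ b = y)) as [Hb'|Hb']; [|exists b; tauto].
  exists c. split; auto. destruct Ha' as [->| ->], Hb' as [->| ->]; split; congruence.
Qed.

Lemma line_card_ge3 (A : X -> Prop) l : Line A -> enum A l -> 3 <= length l.
Proof.
  intros HA [Hn Hl]. destruct (H3 HA) as [a [b [c [Ha [Hb [Hc [Hab [Hac Hbc]]]]]]]].
  change 3 with (length [a; b; c]). apply NoDup_incl_length.
  - repeat constructor; simpl; intuition.
  - intros z [<-|[<-|[<-|[]]]]; apply Hl; auto.
Qed.

Lemma join_point_off (A B : X -> Prop) a b : Line A -> Line B -> A a -> ~ B a -> B b -> ~ A b ->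
  exists q, join a b q /\ ~ A q /\ ~ B q.
Proof.
  intros HA HB Aa nBa Bb nAb. assert (Hab : a <> b) by (intros ->; auto).
  destruct (join_spec Hab) as [HN [Na Nb]].
  destruct (line_third_point a b HN) as [q [Nq [Hqa Hqb]]]. exists q. repeat split; auto.
  - intros Aq. apply nAb. rewrite <- (line_unique HN HA Na Nq Aa Aq (not_eq_sym Hqa)). auto.
  - intros Bq. apply nBa. rewrite <- (line_unique HN HB Nb Nq Bb Bq (not_eq_sym Hqb)). auto.
Qed.

Lemma lines_trichotomy (A B : X -> Prop) : Line A -> Line B ->
  A = B \/ (exists o a, A o /\ B o /\ A a /\ ~ B a) \/ (forall z, A z -> ~ B z).
Proof.
  intros HA HB. destruct (classic (exists o, A o /\ B o)) as [[o [Ao Bo]]|Hn].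
  - destruct (classic (A = B)) as [|Hne]; auto. right; left.
    destruct (line_point_off o HA HB Ao Bo Hne) as [a [? [? ?]]]. exists o, a; auto.
  - right; right. intros z Az Bz. apply Hn; eauto.
Qed.

Lemma flat_join (F : X -> Prop) x y : flat Line F -> F x -> F y -> x <> y -> subset (join x y) F.
Proof. intros HF Fx Fy H z Hz. apply (HF x y Fx Fy H z). apply lxy_join; auto. Qed.

Lemma line_flat (A : X -> Prop) : Line A -> flat Line A.
Proof.
  intros HA x y Ax Ay H z Hz. apply lxy_join in Hz; auto. rewrite (join_eq HA Ax Ay H) in Hz; auto.
Qed.

Lemma closure_flat (A : X -> Prop) : flat Line (closure Line A).
Proof. intros x y Hx Hy H z Hz F HF HAF. apply (HF x y (Hx F HF HAF) (Hy F HF HAF) H z Hz). Qed.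

Lemma closure_subset (A : X -> Prop) : subset A (closure Line A).
Proof. intros z Hz F HF HAF. apply HAF, Hz. Qed.

Definition span3 (u v w : X) : X -> Prop := closure Line (fun z => z = u \/ z = v \/ z = w).

Lemma span3_u u v w : span3 u v w u. Proof. apply closure_subset; auto. Qed.
Lemma span3_v u v w : span3 u v w v. Proof. apply closure_subset; auto. Qed.
Lemma span3_w u v w : span3 u v w w. Proof. apply closure_subset; auto. Qed.

Lemma span3_join u v w x y :
  span3 u v w x -> span3 u v w y -> x <> y -> subset (join x y) (span3 u v w).
Proof. intros. apply flat_join; auto. apply closure_flat. Qed.

Lemma span3_plane u v w : u <> v -> ~ join u v w -> plane Line (span3 u v w).
Proof.
  intros Huv Hw. destruct (join_spec Huv) as [HL0 [Hu Hv]].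
  assert (Huw : u <> w) by (intros ->; auto). assert (Hvw : v <> w) by (intros ->; auto).
  split; [apply closure_flat|]. split.
  - exists [u; v; w]. split; [repeat constructor; simpl; intuition|].
    split; auto. intros z Hz F HF HB. apply Hz; auto. intros y Hy. apply HB. simpl. intuition.
  - intros B HB Hsub. destruct B as [|s [|t [|r B]]]; simpl; try lia; exfalso.
    + apply (Hsub u (@span3_u u v w) (fun _ => False)); [intros x y []| intros ? []].
    + assert (Hfl : flat Line (fun z => z = s)) by (intros x y -> -> H; congruence).
      assert (Hsb : subset (fun z => In z [s]) (fun z => z = s)) by (intros z [->|[]]; auto).
      apply Huv.
      rewrite (Hsub u (@span3_u u v w) _ Hfl Hsb), (Hsub v (@span3_v u v w) _ Hfl Hsb); auto.
    + inversion HB; subst. assert (Hst : s <> t) by (simpl in *; intuition).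
      destruct (join_spec Hst) as [HLst [Hs Ht]].
      assert (Hsb : subset (fun z => In z [s; t]) (join s t)) by (intros z [->|[->|[]]]; auto).
      pose proof (Hsub u (@span3_u u v w) _ (line_flat HLst) Hsb).
      pose proof (Hsub v (@span3_v u v w) _ (line_flat HLst) Hsb).
      pose proof (Hsub w (@span3_w u v w) _ (line_flat HLst) Hsb).
      apply Hw. rewrite (join_eq HLst); auto.
Qed.

Lemma plane_of_line_point (A : X -> Prop) a a' c : Line A -> A a -> A a' -> a <> a' -> ~ A c ->
  plane Line (span3 a a' c) /\ subset A (span3 a a' c).
Proof.
  intros HA Aa Aa' Haa' nAc. rewrite <- (join_eq HA Aa Aa' Haa'). split.
  - apply span3_plane; auto. rewrite (join_eq HA Aa Aa' Haa'). auto.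
  - apply span3_join; auto; [apply span3_u | apply span3_v].
Qed.

Definition hits (B : X -> Prop) (p x : X) : Prop := exists z, B z /\ join p x z.
Definition central_proj (B : X -> Prop) (p x : X) : X :=
  epsilon (inhabits x) (fun w => B w /\ join p x w).

Lemma central_proj_spec B p x :
  hits B p x -> B (central_proj B p x) /\ join p x (central_proj B p x).
Proof. intros H. unfold central_proj. apply epsilon_spec. exact H. Qed.

Section CentralProjection.
Variables (A B : X -> Prop) (p : X).
Hypotheses (HA : Line A) (HB : Line B) (nAp : ~ A p) (nBp : ~ B p).

Lemma center_ne x : A x -> p <> x.
Proof. intros Hx ->; auto. Qed.

Lemma center_join_inj x x' : A x -> A x' -> join p x = join p x' -> x = x'.
Proof.
  intros Hx Hx' E. destruct (classic (x = x')) as [|Hne]; auto. exfalso.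
  destruct (join_spec (center_ne Hx)) as [H1 [H1p H1x]].
  destruct (join_spec (center_ne Hx')) as [_ [_ H2x]]. rewrite <- E in H2x.
  apply nAp. rewrite <- (line_unique H1 HA H1x H2x Hx Hx' Hne). auto.
Qed.

Lemma central_proj_inj x x' : A x -> A x' -> hits B p x -> hits B p x' ->
  central_proj B p x = central_proj B p x' -> x = x'.
Proof.
  intros Hx Hx' Hm Hm' E. apply center_join_inj; auto.
  destruct (central_proj_spec Hm) as [Bw Hw]. destruct (central_proj_spec Hm') as [_ Hw'].
  rewrite <- E in Hw'. set (w := central_proj B p x) in *.
  assert (Hpw : p <> w) by (intros Ew; rewrite <- Ew in Bw; auto).
  destruct (join_spec (center_ne Hx)) as [H1 [H1p _]].
  destruct (join_spec (center_ne Hx')) as [H2 [H2p _]].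
  apply (line_unique H1 H2 H1p Hw H2p Hw' Hpw).
Qed.

Lemma central_proj_avoid x w : A x -> hits B p x -> B w -> (forall z, join p w z -> ~ A z) ->
  central_proj B p x <> w.
Proof.
  intros Hx Hm Bw Hw E. destruct (central_proj_spec Hm) as [_ Hpw]. rewrite E in Hpw.
  assert (Hpw' : p <> w) by (intros Ew; rewrite <- Ew in Bw; auto).
  destruct (join_spec (center_ne Hx)) as [H1 [H1p H1x]].
  rewrite <- (join_eq H1 H1p Hpw Hpw') in H1x. apply (Hw x); auto.
Qed.

Lemma central_proj_inj_plus :
  (forall x x', A x -> A x' -> ~ hits B p x -> ~ hits B p x' -> x = x') -> inj_plus A B 1.
Proof.
  intros Hunhit.
  exists (fun x => if excluded_middle_informative (hits B p x)
                   then inl (central_proj B p x) else inr 0).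
  split.
  - intros x Hx. destruct (excluded_middle_informative _) as [Hm|]; auto. apply (central_proj_spec Hm).
  - intros x x' Hx Hx'.
    destruct (excluded_middle_informative (hits B p x)) as [Hm|Hm];
    destruct (excluded_middle_informative (hits B p x')) as [Hm'|Hm']; intros E; inversion E.
    + apply central_proj_inj; auto.
    + apply Hunhit; auto.
Qed.

Lemma hit_part_card_le lH lB : enum (fun x => A x /\ hits B p x) lH -> enum B lB ->
  length lH <= length lB.
Proof.
  intros HlH HlB. apply (enum_length_le_inj (central_proj B p) HlH HlB).
  - intros x [_ Hm]. apply (central_proj_spec Hm).
  - intros x y [Hx Hm] [Hy Hm']. apply central_proj_inj; auto.
Qed.

Lemma hit_part_card_lt lH lB w : enum (fun x => A x /\ hits B p x) lH -> enum B lB ->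
  B w -> (forall z, join p w z -> ~ A z) -> S (length lH) <= length lB.
Proof.
  intros HlH HlB Bw Hw. destruct (enum_remove w HlB Bw) as [l' [Hl' <-]].
  apply le_n_S, (enum_length_le_inj (central_proj B p) HlH Hl').
  - intros x [Hx Hm]. split; [apply (central_proj_spec Hm) | apply central_proj_avoid; auto].
  - intros x y [Hx Hm] [Hy Hm']. apply central_proj_inj; auto.
Qed.

Lemma all_hit_card_le lA lB : enum A lA -> enum B lB -> (forall x, A x -> hits B p x) ->
  length lA <= length lB.
Proof.
  intros HlA HlB Hall. apply (hit_part_card_le (lH := lA)); auto.
  eapply enum_ext; [|exact HlA]. intros x. split; [split; auto|tauto].
Qed.

Lemma all_hit_card_lt lA lB w : enum A lA -> enum B lB -> (forall x, A x -> hits B p x) ->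
  B w -> (forall z, join p w z -> ~ A z) -> S (length lA) <= length lB.
Proof.
  intros HlA HlB Hall. apply (hit_part_card_lt (lH := lA)); auto.
  eapply enum_ext; [|exact HlA]. intros x. split; [split; auto|tauto].
Qed.

Variable P : X -> Prop.
Hypotheses (HP : plane Line P) (HAP : subset A P) (HBP : subset B P) (Pp : P p).
Hypothesis Hproclus : proclus Line.

(* The lines [px] and [px'] both miss [B], so Proclus makes them equal. *)
Lemma proclus_unhit_unique x x' : A x -> A x' -> ~ hits B p x -> ~ hits B p x' -> x = x'.
Proof.
  intros Hx Hx' Hm Hm'. apply center_join_inj; auto.
  destruct (join_spec (center_ne Hx)) as [H1 [H1p _]].
  destruct (join_spec (center_ne Hx')) as [H2 [H2p _]].
  assert (HPf : flat Line P) by apply HP.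
  apply (@Hproclus P B p HP HB HBP Pp nBp); auto.
  - intros z Hz. split; [apply (flat_join HPf Pp (HAP Hx) (center_ne Hx)); auto|].
    intros Bz. apply Hm. exists z; auto.
  - intros z Hz. split; [apply (flat_join HPf Pp (HAP Hx') (center_ne Hx')); auto|].
    intros Bz. apply Hm'. exists z; auto.
Qed.

Lemma proclus_proj_inj_plus : inj_plus A B 1.
Proof. apply central_proj_inj_plus, proclus_unhit_unique. Qed.

Lemma proclus_proj_enum lB : enum B lB -> exists lA, enum A lA /\ length lA <= length lB + 1.
Proof. intros HlB. apply (inj_plus_enum proclus_proj_inj_plus HlB). Qed.

Lemma proclus_avoid_card_le lA lB w : enum A lA -> enum B lB ->
  B w -> (forall z, join p w z -> ~ A z) -> length lA <= length lB.
Proof.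
  intros HlA HlB Bw Hw. destruct (enum_split (hits B p) HlA) as [lH [lN [HlH [HlN ->]]]].
  pose proof (hit_part_card_lt HlH HlB Bw Hw).
  enough (length lN <= 1) by lia.
  apply (enum_length_le_1 HlN). intros a b [Ha Hma] [Hb Hmb]. apply proclus_unhit_unique; auto.
Qed.
End CentralProjection.

Lemma proclus_meeting_inj_plus (Hproclus : proclus Line) (A B : X -> Prop) o a :
  Line A -> Line B -> A o -> B o -> A a -> ~ B a -> inj_plus A B 1.
Proof.
  intros HA HB Ao Bo Aa nBa.
  assert (HAB : A <> B) by (intros E; subst; auto).
  destruct (line_point_off o HB HA Bo Ao (not_eq_sym HAB)) as [b [Bb [nAb Hbo]]].
  assert (Hoa : o <> a) by (intros ->; auto).
  assert (Hab : a <> b) by (intros ->; auto).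
  destruct (plane_of_line_point b HA Ao Aa Hoa nAb) as [HP HAP].
  destruct (join_point_off a b HA HB Aa nBa Bb nAb) as [q [Nq [nAq nBq]]].
  apply (proclus_proj_inj_plus q HA HB nAq nBq HP); auto.
  - rewrite <- (join_eq HB Bo Bb (not_eq_sym Hbo)).
    apply span3_join; [apply span3_u | apply span3_w | auto].
  - apply (span3_join (@span3_v o a b) (@span3_w o a b) Hab); auto.
Qed.

(* The proaffine axiom, applied at [o] to the lines [B] and [A] and a point [p] of [ab],
   says that every point of [A] but one hits [B] under projection from [p]. *)
Lemma proaffine_meeting_inj_plus (Hproaffine : proaffine Line) (A B : X -> Prop) o a :
  Line A -> Line B -> A o -> B o -> A a -> ~ B a -> inj_plus A B 1.
Proof.
  intros HA HB Ao Bo Aa nBa.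
  assert (HAB : A <> B) by (intros E; subst; auto).
  destruct (line_point_off o HB HA Bo Ao (not_eq_sym HAB)) as [b [Bb [nAb Hbo]]].
  assert (EA : join o a = A) by (apply join_eq; auto; intros ->; auto).
  assert (EB : join o b = B) by (apply join_eq; auto).
  assert (Hba : b <> a) by (intros ->; auto).
  destruct (join_point_off b a HB HA Bb nAb Aa nBa) as [p [Np [nBp nAp]]].
  destruct (Hproaffine o b a p) as [u [_ Hu]].
  - apply lxy_join; auto.
  - rewrite lxy_join, EB; auto.
  - assert (Hhit : forall v, A v -> v <> u -> hits B p v).
    { intros v Av Hvu. assert (Hvp : v <> p) by (intros ->; auto).
      assert (Av' : lxy Line o a v) by (rewrite lxy_join, EA; auto; intros ->; auto).
      destruct (Hu v Av' Hvu) as [w [Hw Bw]].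
      exists w. rewrite lxy_join, EB in Bw by auto. rewrite lxy_join, join_comm in Hw by auto.
      auto. }
    apply (central_proj_inj_plus HA nAp nBp). intros x x' Hx Hx' Hm Hm'.
    destruct (classic (x = u)) as [->|]; [|exfalso; apply Hm; auto].
    destruct (classic (x' = u)) as [->|]; [auto|exfalso; apply Hm'; auto].
Qed.

Section MeetingBound.
Hypothesis Hmeet : forall (A B : X -> Prop) o a,
  Line A -> Line B -> A o -> B o -> A a -> ~ B a -> inj_plus A B 1.

(* Compare [L] and [M] with the transversal [ab], [a] on [L] and [b] on [M]. *)
Lemma disjoint_inj_plus (L M : X -> Prop) : Line L -> Line M -> (forall z, L z -> ~ M z) ->
  inj_plus L M 2.
Proof.
  intros HLl HMl Hd.
  destruct (proj1 HL L HLl) as [a [a2 [Ha [La La2]]]].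
  destruct (proj1 HL M HMl) as [b [_ [_ [Mb _]]]].
  assert (Hab : a <> b) by (intros ->; apply (Hd b); auto).
  destruct (join_spec Hab) as [HN [Na Nb]].
  assert (nNa2 : ~ join a b a2).
  { intros H. apply (Hd b); auto. rewrite <- (line_unique HN HLl Na H La La2 Ha). auto. }
  apply (inj_plus_trans (B := join a b) (k1 := 1) (k2 := 1)).
  - apply (Hmeet a a2); auto.
  - apply (Hmeet b a); auto.
Qed.

Lemma line_inj_plus_2 (L M : X -> Prop) : Line L -> Line M -> inj_plus L M 2.
Proof.
  intros HLl HMl. destruct (lines_trichotomy HLl HMl) as [->|[[o [a [Lo [Mo [La nMa]]]]]|Hd]].
  - apply inj_plus_refl.
  - apply (inj_plus_mono (k := 1)); auto. apply (Hmeet o a); auto.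
  - apply disjoint_inj_plus; auto.
Qed.
End MeetingBound.

(* Put [m = |L|], pick [b] on [M] and let [Pi] be the plane of [L] and [b]. Every line of [Pi]
   through [b] meets [L] and has [m - 1] points, so [Pi \ L] has [1 + m (m - 3)] points.
   The parallels to [bc0] in [Pi] partition [Pi \ L] into classes of [m - 2] points each,
   and [(m - 2) t = 1 + m (m - 3)] has no solution with [t <= m] once [m >= 5]. *)
Section GapTwo.
Hypothesis Hproclus : proclus Line.
Variables (L M : X -> Prop) (lL lM : list X).
Hypotheses (HLl : Line L) (HMl : Line M) (Hdisj : forall z, L z -> ~ M z)
  (HeL : enum L lL) (HeM : enum M lM) (Hgap : length lL = length lM + 2).
Variables (b b' c0 c0' : X).
Hypotheses (Mb : M b) (Mb' : M b') (Hbb' : b <> b') (Lc0 : L c0) (Lc0' : L c0') (Hc0 : c0 <> c0').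

Lemma card_L_ge5 : 5 <= length lL.
Proof. pose proof (line_card_ge3 HMl HeM). lia. Qed.

Lemma b_notin_L : ~ L b.
Proof. intros H; apply (Hdisj H); auto. Qed.

Lemma b_ne c : L c -> b <> c.
Proof. intros Lc E. apply b_notin_L. rewrite E; auto. Qed.

Let Pi := span3 c0 c0' b.

Lemma Pi_plane : plane Line Pi.
Proof. apply (plane_of_line_point b HLl Lc0 Lc0' Hc0 b_notin_L). Qed.

Lemma L_in_Pi : subset L Pi.
Proof. apply (plane_of_line_point b HLl Lc0 Lc0' Hc0 b_notin_L). Qed.

Lemma b_in_Pi : Pi b.
Proof. apply span3_w. Qed.

Lemma join_in_Pi x y : Pi x -> Pi y -> x <> y -> subset (join x y) Pi.
Proof. apply span3_join. Qed.

Lemma pencil_spec c : L c -> Line (join b c) /\ join b c b /\ join b c c /\ subset (join b c) Pi.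
Proof.
  intros Lc. destruct (join_spec (b_ne Lc)) as [? [? ?]]. repeat split; auto.
  apply join_in_Pi; [apply b_in_Pi | apply L_in_Pi | apply b_ne]; auto.
Qed.

Lemma pencil_meets_L_once c x : L c -> join b c x -> L x -> x = c.
Proof.
  intros Lc Nx Lx. destruct (pencil_spec Lc) as [HN [Nb [Nc _]]].
  destruct (classic (x = c)) as [|Hne]; auto. exfalso. apply b_notin_L.
  rewrite <- (line_unique HN HLl Nx Nc Lx Lc Hne); auto.
Qed.

Lemma pencil_eq c x : L c -> x <> b -> join b x c -> join b x = join b c.
Proof.
  intros Lc Hxb Hc. destruct (join_spec (not_eq_sym Hxb)) as [Hl [Hlb _]].
  symmetry. apply join_eq; auto. apply b_ne; auto.
Qed.

(* [|bc| <= |M| + 1] in the plane of [M] and [c], and [|L| <= |bc| + 1] in [Pi]. *)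
Lemma pencil_card c : L c -> exists l, enum (join b c) l /\ length l = length lL - 1.
Proof.
  intros Lc. destruct (pencil_spec Lc) as [HN [Nb [Nc NPi]]].
  assert (nMc : ~ M c) by (apply Hdisj; auto).
  assert (nNb' : ~ join b c b').
  { intros Nb'. apply nMc. rewrite <- (line_unique HN HMl Nb Nb' Mb Mb' Hbb'). auto. }
  destruct (plane_of_line_point c HMl Mb Mb' Hbb' nMc) as [HP HMP].
  destruct (join_point_off c b' HN HMl Nc nMc Mb' nNb') as [q [Qq [nNq nMq]]].
  destruct (proclus_proj_enum q HN HMl nNq nMq HP) with (lB := lM) as [lN [HlN HlNlen]]; auto.
  { apply span3_join; [apply span3_u | apply span3_w | apply b_ne; auto]. }
  { apply (span3_join (@span3_w b b' c) (@span3_v b b' c)); auto. intros ->; auto. }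
  destruct (line_point_ne c HLl) as [c' [Lc' Hc'c]].
  assert (nNc' : ~ join b c c') by (intros H; apply Hc'c, (pencil_meets_L_once Lc H Lc')).
  destruct (join_point_off c' b HLl HN Lc' nNc' Nb b_notin_L) as [q' [Qq' [nLq' nNq']]].
  destruct (proclus_proj_enum q' HLl HN nLq' nNq' Pi_plane L_in_Pi NPi) with (lB := lN)
    as [lL' [HlL' HlL'len]]; auto.
  { refine (join_in_Pi _ b_in_Pi _ _ Qq'); [apply L_in_Pi; auto | apply not_eq_sym, b_ne; auto]. }
  exists lN. split; auto. pose proof (enum_length_unique HlL' HeL). lia.
Qed.

Definition pencil_list c : list X :=
  epsilon (inhabits nil) (fun l => enum (join b c) l /\ length l = length lL - 1).

Lemma pencil_list_spec c :
  L c -> enum (join b c) (pencil_list c) /\ length (pencil_list c) = length lL - 1.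
Proof. intros Lc. unfold pencil_list. apply epsilon_spec. apply pencil_card; auto. Qed.

(* Otherwise [xb] misses [L], and projecting [L] from [x] onto [bc0] misses [b]. *)
Lemma pencil_meets_L x : Pi x -> x <> b -> exists c, L c /\ join b x c.
Proof.
  intros Px Hxb. apply NNPP. intros H.
  destruct (join_spec (not_eq_sym Hxb)) as [Hl [Hlb Hlx]].
  assert (nLx : ~ L x) by (intros Lx; apply H; exists x; auto).
  destruct (pencil_spec Lc0) as [HN [Nb [Nc NPi]]].
  assert (nNx : ~ join b c0 x).
  { intros Nx. apply H. exists c0. split; auto. rewrite (line_unique Hl HN Hlb Hlx Nb Nx); auto. }
  destruct (pencil_list_spec Lc0) as [HeN HeNlen].
  enough (length lL <= length (pencil_list c0)) by (pose proof card_L_ge5; lia).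
  apply (proclus_avoid_card_le x HLl HN nLx nNx Pi_plane L_in_Pi NPi Px Hproclus b HeL HeN Nb).
  intros z Hz Lz. apply H. exists z. split; auto. rewrite join_comm; auto.
Qed.

(* Otherwise projecting [L] from [x] onto [bc] is total, so [|L| <= |bc|]. *)
Lemma parallel_exists c x : L c -> Pi x -> ~ L x -> ~ join b c x ->
  exists l, L l /\ forall z, join x l z -> ~ join b c z.
Proof.
  intros Lc Px nLx nNx. apply NNPP. intros H.
  destruct (pencil_spec Lc) as [HN _]. destruct (pencil_list_spec Lc) as [HeN HeNlen].
  enough (length lL <= length (pencil_list c)) by (pose proof card_L_ge5; lia).
  apply (all_hit_card_le HLl nLx nNx HeL HeN). intros l Ll. apply NNPP. intros Hm.
  apply H. exists l. split; auto. intros z Hz Nz. apply Hm. exists z; auto.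
Qed.

Definition off_L (x : X) : Prop := Pi x /\ ~ L x.

Lemma off_L_finite : exists lS, enum off_L lS.
Proof.
  apply (enum_of_cover off_L (b :: concat (map pencil_list lL))). intros x [Px nLx].
  destruct (classic (x = b)) as [->|Hxb]; [left; auto|right].
  destruct (pencil_meets_L Px Hxb) as [c [Lc Hc]]. apply in_concat. exists (pencil_list c). split.
  - apply in_map, HeL, Lc.
  - apply (pencil_list_spec Lc). rewrite <- (pencil_eq Lc Hxb Hc). apply join_spec; auto.
Qed.

Definition pencil_foot (x : X) : X := epsilon (inhabits x) (fun c => L c /\ join b x c).

Lemma pencil_foot_spec x : Pi x -> x <> b -> L (pencil_foot x) /\ join b x (pencil_foot x).
Proof. intros Px Hxb. unfold pencil_foot. apply epsilon_spec. apply pencil_meets_L; auto. Qed.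

Lemma pencil_fibre c x : L c ->
  (off_L x /\ x <> b) /\ pencil_foot x = c <-> (join b c x /\ x <> b) /\ x <> c.
Proof.
  intros Lc. destruct (pencil_spec Lc) as [HN [Nb [Nc NPi]]]. split.
  - intros [[[Px nLx] Hxb] <-]. destruct (pencil_foot_spec Px Hxb) as [Lg Hg].
    rewrite <- (pencil_eq Lg Hxb Hg). destruct (join_spec (not_eq_sym Hxb)) as [_ [_ ?]].
    split; auto. intros E. rewrite <- E in Lg. auto.
  - intros [[Nx Hxb] Hxc].
    assert (Sx : off_L x) by (split; auto; intros Lx; apply Hxc, (pencil_meets_L_once Lc Nx Lx)).
    split; auto. destruct (pencil_foot_spec (proj1 Sx) Hxb) as [Lg Hg].
    rewrite (join_eq HN Nb Nx (not_eq_sym Hxb)) in Hg. apply (pencil_meets_L_once Lc Hg Lg).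
Qed.

(* [b] together with the [m - 3] points of each line [bc] other than [b] and [c]. *)
Lemma off_L_card_by_pencil lS : enum off_L lS -> length lS = 1 + length lL * (length lL - 3).
Proof.
  intros HS. assert (Sb : off_L b) by (split; [apply b_in_Pi | apply b_notin_L]).
  destruct (enum_remove b HS Sb) as [lS' [HS' <-]].
  assert (Hg : forall x, In x lS' -> In (pencil_foot x) lL).
  { intros x Hx. apply HS' in Hx as [[Px _] Hxb]. apply HeL, (pencil_foot_spec Px Hxb). }
  rewrite (@length_by_fibres X pencil_foot lL lS' (proj1 HeL) Hg),
          (@list_sum_map_const _ lL _ (length lL - 3)).
  { pose proof card_L_ge5. lia. }
  intros c Hc. apply HeL in Hc as Lc.
  destruct (pencil_list_spec Lc) as [HN HNlen]. destruct (pencil_spec Lc) as [_ [Nb [Nc _]]].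
  destruct (enum_remove b HN Nb) as [l1 [Hl1 Hl1len]].
  destruct (enum_remove c Hl1 (conj Nc (not_eq_sym (b_ne Lc)))) as [l2 [Hl2 Hl2len]].
  rewrite (enum_length_unique (enum_filter (fun x => asbool (pencil_foot x = c)) HS') (l2 := l2)).
  { lia. }
  eapply enum_ext; [|exact Hl2]. intros x. simpl. rewrite asbool_true, pencil_fibre; tauto.
Qed.

Let Y0 := join b c0.

(* The parallel to [Y0] through [x] meets [L] in [parallel_foot x]. *)
Definition parallel_foot (x : X) : X :=
  if excluded_middle_informative (Y0 x) then c0
  else epsilon (inhabits c0) (fun l => L l /\ forall z, join x l z -> ~ Y0 z).

Definition parallel_line (x : X) : X -> Prop := join x (parallel_foot x).

Definition parallel_to_Y0 (K : X -> Prop) : Prop :=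
  Line K /\ subset K Pi /\ (K = Y0 \/ forall z, K z -> ~ Y0 z).

Lemma Y0_spec : Line Y0 /\ Y0 b /\ Y0 c0 /\ subset Y0 Pi.
Proof. apply pencil_spec; auto. Qed.

Lemma parallel_foot_spec x : off_L x -> L (parallel_foot x) /\ x <> parallel_foot x /\
  ((Y0 x /\ parallel_foot x = c0) \/ (~ Y0 x /\ forall z, join x (parallel_foot x) z -> ~ Y0 z)).
Proof.
  intros [Px nLx]. unfold parallel_foot. destruct (excluded_middle_informative (Y0 x)) as [Hy|Hy].
  - repeat split; auto. intros ->; auto.
  - set (l := epsilon _ _).
    assert (Hl : L l /\ forall z, join x l z -> ~ Y0 z) by (apply epsilon_spec, parallel_exists; auto).
    destruct Hl as [Ll Hl]. repeat split; auto. intros E. rewrite <- E in Ll. auto.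
Qed.

Lemma parallel_line_spec x : off_L x ->
  parallel_to_Y0 (parallel_line x) /\ parallel_line x x /\ parallel_line x (parallel_foot x).
Proof.
  intros Sx. destruct (parallel_foot_spec Sx) as [Ld [Hxd Hc]].
  destruct (join_spec Hxd) as [Hl [Hlx Hld]]. unfold parallel_line. repeat split; auto.
  - apply join_in_Pi; auto; [apply Sx | apply L_in_Pi; auto].
  - destruct Hc as [[Yx Ed]|[_ Hz]]; auto. left.
    destruct Y0_spec as [HY [_ [Yc _]]]. rewrite Ed in *. apply join_eq; auto.
Qed.

Lemma parallel_unique K K' z : parallel_to_Y0 K -> parallel_to_Y0 K' -> K z -> K' z -> K = K'.
Proof.
  intros [HK [KPi Kc]] [HK' [KPi' Kc']] Kz Kz'.
  destruct Kc as [->|Kd], Kc' as [->|Kd']; auto;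
    [exfalso; apply (Kd' z); auto | exfalso; apply (Kd z); auto |].
  destruct Y0_spec as [HY [_ [_ YPi]]].
  apply (@Hproclus Pi Y0 z Pi_plane HY YPi (KPi z Kz) (Kd z Kz) K K' HK HK' Kz); auto;
    intros y Ky; split; auto.
Qed.

(* A parallel [K] other than [Y0] misses [b]; projecting from [b], [L] covers [K] and
   [c0] is not hit, while [K] covers [L] up to one point. *)
Lemma parallel_line_card x :
  off_L x -> exists l, enum (parallel_line x) l /\ length l = length lL - 1.
Proof.
  intros Sx. destruct (parallel_line_spec Sx) as [[HK [KPi Kc]] [Kx Kd]].
  destruct Kc as [E|Kd']; [rewrite E; exists (pencil_list c0); apply pencil_list_spec; auto|].
  set (K := parallel_line x) in *.
  destruct Y0_spec as [HY [Yb [Yc YPi]]].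
  assert (nKb : ~ K b) by (intros H; apply (Kd' b); auto).
  destruct (proclus_proj_enum b HK HLl nKb b_notin_L Pi_plane KPi L_in_Pi b_in_Pi Hproclus HeL)
    as [lK [HlK _]].
  assert (Hlt : S (length lK) <= length lL).
  { apply (all_hit_card_lt HK nKb b_notin_L c0 HlK HeL); auto.
    - intros y Ky. assert (Hyb : y <> b) by (intros ->; auto).
      destruct (pencil_meets_L (KPi y Ky) Hyb) as [c [Lc Hc]]. exists c. split; auto.
    - intros z Hz Kz. apply (Kd' z Kz). exact Hz. }
  destruct (proclus_proj_enum b HLl HK b_notin_L nKb Pi_plane L_in_Pi KPi b_in_Pi Hproclus HlK)
    as [lL' [HlL' Hle]].
  pose proof (enum_length_unique HlL' HeL). exists lK. split; auto. lia.
Qed.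

Lemma parallel_fibre x z : off_L x ->
  off_L z /\ parallel_foot z = parallel_foot x <-> parallel_line x z /\ z <> parallel_foot x.
Proof.
  intros Sx. destruct (parallel_line_spec Sx) as [Ix [Kx Kd]].
  destruct (parallel_foot_spec Sx) as [Ld _]. pose proof Ix as [HK [KPi _]]. split.
  - intros [Sz E]. destruct (parallel_line_spec Sz) as [Iz [Kz Kzd]].
    rewrite E in Kzd. rewrite <- (parallel_unique _ Iz Ix Kzd Kd). split; auto.
    intros ->. apply (proj2 Sz); auto.
  - intros [Kz Hzd].
    assert (nLz : ~ L z).
    { intros Lz. apply (proj2 Sx). rewrite <- (line_unique HK HLl Kz Kd Lz Ld Hzd). auto. }
    assert (Sz : off_L z) by (split; auto; apply KPi; auto).
    split; auto. destruct (parallel_line_spec Sz) as [Iz [Kzz Kzd]].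
    destruct (parallel_foot_spec Sz) as [Ldz _].
    rewrite (parallel_unique _ Iz Ix Kzz Kz) in Kzd.
    apply NNPP. intros Hne. apply (proj2 Sx).
    rewrite <- (line_unique HK HLl Kzd Kd Ldz Ld Hne). auto.
Qed.

(* Each fibre of [parallel_foot] over [L] is empty or a parallel minus its point on [L]. *)
Lemma off_L_card_by_parallels lS : enum off_L lS ->
  exists t, t <= length lL /\ length lS = t * (length lL - 2).
Proof.
  intros HS.
  assert (Hg : forall x, In x lS -> In (parallel_foot x) lL).
  { intros x Hx. apply HS in Hx. apply HeL, (parallel_foot_spec Hx). }
  rewrite (@length_by_fibres X parallel_foot lL lS (proj1 HeL) Hg).
  apply list_sum_map_two_values. intros d Hd.
  pose proof (enum_filter (fun x => asbool (parallel_foot x = d)) HS) as HB.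
  destruct (classic (exists x, off_L x /\ parallel_foot x = d)) as [[x [Sx <-]]|Hn].
  - right. destruct (parallel_line_card Sx) as [lK [HlK HlKlen]].
    destruct (enum_remove (parallel_foot x) HlK (proj2 (proj2 (parallel_line_spec Sx))))
      as [l' [Hl' Hl'len]].
    rewrite (enum_length_unique HB (l2 := l')); [lia|].
    eapply enum_ext; [|exact Hl']. intros z. simpl. rewrite asbool_true, parallel_fibre; tauto.
  - left. apply (enum_length_0 HB). intros a [Sa Ha]. cbv beta in Ha. rewrite asbool_true in Ha. eauto.
Qed.

Lemma no_gap_two : False.
Proof.
  destruct off_L_finite as [lS HS]. pose proof (off_L_card_by_pencil HS) as H1.
  destruct (off_L_card_by_parallels HS) as [t [Ht H2]]. pose proof card_L_ge5.
  rewrite H1 in H2. destruct (le_lt_dec t (length lL - 2)); nia.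
Qed.
End GapTwo.

(* An infinite [M] absorbs the extra point; a finite one cannot leave a gap of two. *)
Lemma proclus_disjoint_inj_plus (Hproclus : proclus Line) (L M : X -> Prop) :
  Line L -> Line M -> (forall z, L z -> ~ M z) -> inj_plus L M 1.
Proof.
  intros HLl HMl Hd.
  pose proof (disjoint_inj_plus (proclus_meeting_inj_plus Hproclus) HLl HMl Hd) as H2.
  destruct (finite_or_dedekind_infinite M) as [[lM HeM]|[e [He He_inj]]].
  - destruct (inj_plus_enum H2 HeM) as [lL [HeL Hlen]].
    destruct (le_lt_dec (length lL) (length lM + 1)) as [Hle|Hlt].
    + apply (inj_plus_of_length 1 HeL HeM Hle).
    + exfalso.
      destruct (proj1 HL L HLl) as [c0 [c0' [Hc0 [Lc0 Lc0']]]].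
      destruct (proj1 HL M HMl) as [b [b' [Hbb' [Mb Mb']]]].
      apply (no_gap_two Hproclus HLl HMl Hd HeL HeM) with b b' c0 c0'; auto. lia.
  - apply (inj_plus_absorb e He He_inj H2).
Qed.

Lemma proclus_inj_plus (Hproclus : proclus Line) (L M : X -> Prop) :
  Line L -> Line M -> inj_plus L M 1.
Proof.
  intros HLl HMl. destruct (lines_trichotomy HLl HMl) as [->|[[o [a [Lo [Mo [La nMa]]]]]|Hd]].
  - apply inj_plus_refl.
  - apply (proclus_meeting_inj_plus Hproclus o a); auto.
  - apply proclus_disjoint_inj_plus; auto.
Qed.
End Liner.

Theorem corollary3p3p26 (X : Type) (Line : (X -> Prop) -> Prop) :
  is_liner Line -> three_long Line ->
  (proaffine Line ->
     forall L M, Line L -> Line M -> card_le_plus L M 2) /\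
  (proclus Line ->
     forall L M, Line L -> Line M -> card_le_plus L M 1).
Proof.
  intros HL H3. split.
  - intros Hproaffine L M HLl HMl. apply card_le_plus_of_inj_plus.
    apply (line_inj_plus_2 HL (proaffine_meeting_inj_plus HL H3 Hproaffine)); auto.
  - intros Hproclus L M HLl HMl. apply card_le_plus_of_inj_plus.
    apply (proclus_inj_plus HL H3 Hproclus); auto.
Qed.
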